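(* In the setting below, the cokernel of $\bar\rho_{\mathfrak{ab}}\colon\bar G_{\mathfrak{ab}}\to\bar A_{\mathfrak{ab}}$ is free abelian.
   Context: Let $G$ be a group generated by $a_1,\dots,a_n$ with $z=a_1\cdots a_n$ central. Let $S_1,\dots,S_m\subseteq\{1,\dots,n\}$ with $|S_i\cap S_r|\le1$ for $i\neq r$. For $S\subseteq\{1,\dots,n\}$ let $G_S$ be the quotient of $G$ by the normal closure of $\{a_j:j\notin S\}$; let $a_{ij}$ be the image of $a_j$ in $G_{S_i}$ and $z_i=a_{i1}\cdots a_{in}$ (central in $G_{S_i}$). Let $\bar G=G/\langle z\rangle$, $\bar G_{S_i}=G_{S_i}/\langle z_i\rangle$, and assume each $\bar G_{S_i}$ is free of rank $|S_i|-1$, the images of any $|S_i|-1$ of the $a_{ij}$, $j\in S_i$, forming a free basis. Let $A=\prod_iG_{S_i}$, $\bar A=\prod_i\bar G_{S_i}$, $\rho\colon G\to A$ the product of projections and $\bar\rho\colon\bar G\to\bar A$ the induced map. Assume the abelianizations $G_{\mathfrak{ab}}$ and $A_{\mathfrak{ab}}$ are free abelian with bases the images of $a_1,\dots,a_n$ and of $a_{ij}$ ($1\le i\le m$, $j\in S_i$) respectively. The subscript $\mathfrak{ab}$ denotes abelianization of groups and homomorphisms. *)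

(* Possibly infinite groups are MathComp's [groupType]
   (boot/monoid.v); abelian groups are MathComp's [zmodType]. *)
From HB Require Import structures.
From mathcomp Require Import all_boot.
From Stdlib Require Import FunctionalExtensionality.

Set Implicit Arguments.
Unset Strict Implicit.
Unset Printing Implicit Defensive.

Local Open Scope group_scope.

Section GroupNotions.
Variable G : groupType.

Definition is_subgroup (N : G -> Prop) : Prop :=
  N 1 /\ (forall x y, N x -> N y -> N (x * y^-1)).

Definition is_normal_subgroup (N : G -> Prop) : Prop :=
  is_subgroup N /\ (forall x g, N x -> N (x ^ g)).

Definition subgroup_gen (X : G -> Prop) : G -> Prop :=
  fun x => forall N, is_subgroup N -> (forall y, X y -> N y) -> N x.

Definition normal_closure (X : G -> Prop) : G -> Prop :=
  fun x => forall N, is_normal_subgroup N -> (forall y, X y -> N y) -> N x.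

Definition commutator_subgroup : G -> Prop :=
  subgroup_gen (fun x => exists y z, x = [~ y, z]).

End GroupNotions.

Definition group_hom (G H : groupType) (f : G -> H) : Prop :=
  forall x y, f (x * y) = f x * f y.

(* [f : G -> H] is a quotient map of G by the normal subgroup N,
   i.e. H together with f is (a copy of) G/N with its projection. *)
Definition is_quotient_map (G H : groupType) (N : G -> Prop) (f : G -> H) : Prop :=
  [/\ group_hom f, (forall y, exists x, f x = y) & (forall x, f x = 1 <-> N x)].

Definition free_group_basis (H : groupType) (I : Type) (b : I -> H) : Prop :=
  forall (K : groupType) (f : I -> K),
    (exists g : H -> K, group_hom g /\ forall i, g (b i) = f i) /\
    (forall g1 g2 : H -> K, group_hom g1 -> group_hom g2 ->
       (forall i, g1 (b i) = g2 (b i)) -> forall x, g1 x = g2 x).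

Definition zadditive (M N : zmodType) (f : M -> N) : Prop :=
  forall x y, f (x + y)%R = (f x + f y)%R.

Definition is_abelianization (H : groupType) (M : zmodType) (f : H -> M) : Prop :=
  [/\ forall x y, f (x * y) = (f x + f y)%R,
      (forall y, exists x, f x = y) &
      (forall x, f x = 0%R <-> commutator_subgroup x)].

Definition free_abelian_basis (M : zmodType) (I : Type) (b : I -> M) : Prop :=
  forall (N : zmodType) (f : I -> N),
    (exists g : M -> N, zadditive g /\ forall i, g (b i) = f i) /\
    (forall g1 g2 : M -> N, zadditive g1 -> zadditive g2 ->
       (forall i, g1 (b i) = g2 (b i)) -> forall x, g1 x = g2 x).

Definition is_free_abelian (M : zmodType) : Prop :=
  exists (I : Type) (b : I -> M), free_abelian_basis b.

Definition is_cokernel (M N C : zmodType) (f : M -> N) (c : N -> C) : Prop :=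
  [/\ zadditive c, (forall y, exists x, c x = y) &
      (forall y, c y = 0%R <-> exists x, y = f x)].

Section ProdGroup.
Variables (m : nat) (F : 'I_m -> groupType).

Definition prodG := {dffun forall i, F i}.
HB.instance Definition _ := Choice.on prodG.

Definition prodG_mul (x y : prodG) : prodG := [ffun i => x i * y i].
Definition prodG_one : prodG := [ffun i => 1].
Definition prodG_inv (x : prodG) : prodG := [ffun i => (x i)^-1].

Fact prodG_mulA : associative prodG_mul.
Proof. by move=> x y z; apply/ffunP=> i; rewrite !ffunE mulgA. Qed.
Fact prodG_mul1 : left_id prodG_one prodG_mul.
Proof. by move=> x; apply/ffunP=> i; rewrite !ffunE mul1g. Qed.
Fact prodG_mulg1 : right_id prodG_one prodG_mul.
Proof. by move=> x; apply/ffunP=> i; rewrite !ffunE mulg1. Qed.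
Fact prodG_mulV : left_inverse prodG_one prodG_inv prodG_mul.
Proof. by move=> x; apply/ffunP=> i; rewrite !ffunE mulVg. Qed.
Fact prodG_mulgV : right_inverse prodG_one prodG_inv prodG_mul.
Proof. by move=> x; apply/ffunP=> i; rewrite !ffunE mulgV. Qed.

HB.instance Definition _ := isGroup.Build prodG
  prodG_mulA prodG_mul1 prodG_mulg1 prodG_mulV prodG_mulgV.

Definition prodG_inj (i : 'I_m) (x : F i) : prodG :=
  [ffun k => match i =P k with
             | ReflectT e => ecast k (F k) e x
             | ReflectF _ => 1
             end].

End ProdGroup.

(* Abelianizing and passing to the quotients by the central elements, the
   abelian group Abar_ab is the direct sum of the groups (Gbar_{S_i})_ab, each
   generated by the images e_ij (j in S_i) of the a_j subject only to the
   relation sum_j e_ij = 0, and the image of rhobar_ab is spanned by the column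
   sums sum_{i | j in S_i} e_ij.  Hence the additive maps from the cokernel to
   an abelian group N are exactly the N-labellings of the edges of the
   bipartite graph E = {(i, j) | j in S_i} whose row and column sums vanish,
   i.e. the 1-cycles of E.  Deleting the edges of E one at a time, an edge
   lying on a cycle of the remaining graph can be labelled freely while a
   bridge is forced to carry 0; so a 1-cycle is freely determined by its
   values on a set B of edges, and the cokernel is free abelian with basis the
   images of the e_ij, (i, j) in B. *)

From HB Require Import structures.
From mathcomp Require Import all_boot.
From Stdlib Require Import ClassicalEpsilon ChoiceFacts.
Import Algebra.

Set Implicit Arguments.
Unset Strict Implicit.
Unset Printing Implicit Defensive.

Section BalancedEdgeLabellings.
Variables (I J : finType).
Local Open Scope ring_scope.
Implicit Types (E B : {set I * J}) (e : I * J) (x y v : I + J).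

Definition edge_boundary (N : zmodType) e (c : N) v : N :=
  c *+ (v == inl e.1) - c *+ (v == inr e.2).

Definition boundary (N : zmodType) E (h : I * J -> N) v : N :=
  \sum_(e in E) edge_boundary e (h e) v.

Definition balanced (N : zmodType) E (h : I * J -> N) := forall v, boundary E h v = 0.

Definition incident E : rel (I + J) := fun x y =>
  match x, y with
  | inl i, inr j | inr j, inl i => (i, j) \in E
  | _, _ => false
  end.

Definition balanced_basis E B := B \subset E /\ forall N : zmodType,
  (forall h : I * J -> N, balanced E h ->
     {in B, forall e, h e = 0} -> {in E, forall e, h e = 0}) /\
  (forall f : I * J -> N, exists2 h, balanced E h & {in B, h =1 f}).

Section Boundary.
Variable N : zmodType.
Implicit Types (c : N) (h g : I * J -> N).

Lemma edge_boundary0 e v : edge_boundary e (0 : N) v = 0.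
Proof. by rewrite /edge_boundary !mul0rn subrr. Qed.

Lemma edge_boundaryD e c1 c2 v :
  edge_boundary e (c1 + c2) v = edge_boundary e c1 v + edge_boundary e c2 v.
Proof. by rewrite /edge_boundary !mulrnDl addrACA opprD. Qed.

Lemma sum_mulrn_eq (T : finType) (R : pred T) (t : T) c :
  \sum_(s | R s) c *+ (s == t) = c *+ R t.
Proof.
case: (boolP (R t)) => Rt.
  rewrite (bigD1 t) //= eqxx big1 ?addr0 // => s /andP [_ /negPf ->].
  exact: mulr0n.
by rewrite big1 // => s Rs; case: eqP Rs Rt => // -> ->.
Qed.

Lemma sum_edge_boundary (R : pred (I + J)) e c :
  \sum_(v | R v) edge_boundary e c v = c *+ R (inl e.1) - c *+ R (inr e.2).
Proof. by rewrite sumrB !sum_mulrn_eq. Qed.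

Lemma boundaryD E h g v :
  boundary E (fun e => h e + g e) v = boundary E h v + boundary E g v.
Proof. by rewrite /boundary -big_split; apply: eq_bigr => e _; apply: edge_boundaryD. Qed.

Lemma eq_boundary E h g : {in E, h =1 g} -> boundary E h =1 boundary E g.
Proof. by move=> hg v; apply: eq_bigr => e /hg ->. Qed.

Lemma boundaryD1 E h e v : e \in E ->
  boundary E h v = edge_boundary e (h e) v + boundary (E :\ e) h v.
Proof.
move=> eE; rewrite /boundary (bigD1 e) //=; congr (_ + _).
by apply: eq_bigl => p; rewrite in_setD1 andbC.
Qed.

Lemma boundary_point E e c v : e \in E ->
  boundary E (fun p => c *+ (p == e)) v = edge_boundary e c v.
Proof.
move=> eE; rewrite (boundaryD1 _ _ eE) eqxx /boundary big1 ?addr0 // => p.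
by rewrite in_setD1 => /andP [/negPf -> _]; rewrite mulr0n edge_boundary0.
Qed.

Lemma boundary_incident E c x y : incident E x y ->
  exists g, forall v, boundary E g v = c *+ (v == x) - c *+ (v == y).
Proof.
case: x y => [i|j] [i'|j'] //= ijE.
  by exists (fun p => c *+ (p == (i, j'))) => v; apply: boundary_point.
exists (fun p => (- c) *+ (p == (i', j))) => v.
by rewrite boundary_point // /edge_boundary !mulNrn opprK addrC.
Qed.

Lemma boundary_path E c x p : path (incident E) x p ->
  exists g, forall v, boundary E g v = c *+ (v == x) - c *+ (v == last x p).
Proof.
elim: p x => [|y p IH] x /=.
  move=> _; exists (fun _ => 0) => v.
  by rewrite subrr /boundary big1 // => e _; apply: edge_boundary0.
case/andP => /(boundary_incident c) [g1 Hg1] /IH [g2 Hg2].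
by exists (fun e => g1 e + g2 e) => v; rewrite boundaryD Hg1 Hg2 addrA subrK.
Qed.

Lemma sum_boundary_closed E h (R : pred (I + J)) :
  {in E, forall e, R (inl e.1) = R (inr e.2)} -> \sum_(v | R v) boundary E h v = 0.
Proof.
move=> closedR; rewrite exchange_big big1 // => e eE.
by rewrite sum_edge_boundary closedR ?subrr.
Qed.

Lemma boundary_inl E h i : boundary E h (inl i) = \sum_(j | (i, j) \in E) h (i, j).
Proof.
transitivity (\sum_(i0 | i0 == i) \sum_(j | (i0, j) \in E) h (i0, j)); last first.
  by rewrite big_pred1_eq.
rewrite pair_big_dep /boundary /edge_boundary big_mkcond [RHS]big_mkcond.
apply: eq_bigr => -[x y] _ /=.
rewrite mulr0n subr0 andbC; case: ifP => //= _.
by rewrite mulrb; congr (if _ then _ else _); apply/eqP/eqP => [[]|] ->.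
Qed.

Lemma boundary_inr E h j : boundary E h (inr j) = - \sum_(i | (i, j) \in E) h (i, j).
Proof.
transitivity (- \sum_i \sum_(j0 | ((i, j0) \in E) && (j0 == j)) h (i, j0)).
  rewrite pair_big_dep /boundary /edge_boundary -sumrN big_mkcond [RHS]big_mkcond.
  apply: eq_bigr => -[x y] _ /=.
  rewrite mulr0n sub0r; case: ifP => //= _.
  by rewrite -mulNrn mulrb; congr (if _ then _ else _); apply/eqP/eqP => [[]|] ->.
apply: congr1; rewrite [RHS]big_mkcond; apply: eq_bigr => i _.
by rewrite big_mkcondl big_pred1_eq.
Qed.

Lemma balancedP E h : balanced E h <->
  (forall i, \sum_(j | (i, j) \in E) h (i, j) = 0) /\
  (forall j, \sum_(i | (i, j) \in E) h (i, j) = 0).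
Proof.
split=> [bal | [rows cols] [i|j]].
- split=> [i|j]; first by rewrite -boundary_inl.
  by apply/eqP; rewrite -oppr_eq0 -boundary_inr bal.
- by rewrite boundary_inl.
- by rewrite boundary_inr cols oppr0.
Qed.

End Boundary.

Lemma balanced_basis_cycle E B e : e \in E ->
  connect (incident (E :\ e)) (inl e.1) (inr e.2) ->
  balanced_basis (E :\ e) B -> balanced_basis E (e |: B).
Proof.
move=> eE /connectP [w pth wlast] [sB basisB]; split.
  by rewrite subUset sub1set eE (subset_trans sB) ?subsetDl.
move=> N; have [uniqB extB] := basisB N; split.
- move=> h bal h0 p pE.
  have he : h e = 0 by apply: h0; rewrite setU11.
  have bal' : balanced (E :\ e) h.
    by move=> v; rewrite -(bal v) (boundaryD1 _ _ eE) he edge_boundary0 add0r.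
  case: (p =P e) => [-> //|/eqP ne]; apply: uniqB => //.
    by move=> q qB; apply: h0; rewrite in_setU1 qB orbT.
  by rewrite in_setD1 ne.
- move=> f; have [g Hg] := boundary_path (- f e) pth.
  have [h1 bal1 Hh1] := extB (fun p => f p - g p).
  exists (fun p => if p == e then f e else h1 p + g p); last first.
    move=> p; rewrite in_setU1; case: eqP => [-> //|_] /= pB.
    by rewrite Hh1 // subrK.
  move=> v; rewrite (boundaryD1 _ _ eE) eqxx.
  rewrite (@eq_boundary _ _ _ (fun p => h1 p + g p)); last first.
    by move=> p; rewrite in_setD1 => /andP [/negPf ->].
  by rewrite boundaryD bal1 add0r Hg -wlast -edge_boundaryD addrN edge_boundary0.
Qed.

Lemma balanced_basis_bridge E B e : e \in E ->
  ~~ connect (incident (E :\ e)) (inl e.1) (inr e.2) ->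
  balanced_basis (E :\ e) B -> balanced_basis E B.
Proof.
move=> eE disc [sB basisB]; split; first by rewrite (subset_trans sB) ?subsetDl.
move=> N; have [uniqB extB] := basisB N; split.
- move=> h bal h0.
  set R := connect (incident (E :\ e)) (inl e.1).
  have closedR : {in E :\ e, forall p, R (inl p.1) = R (inr p.2)}.
    move=> [i j] pE; apply/idP/idP => /connect_trans; apply; exact: connect1.
  have bal_rest v : boundary (E :\ e) h v = - edge_boundary e (h e) v.
    by apply/eqP; rewrite -addr_eq0 addrC -(boundaryD1 _ _ eE) bal.
  (* Summed over the component of [inl e.1], which misses [inr e.2], the
     boundary of [h] on [E :\ e] only sees the contribution of [e]. *)
  have he : h e = 0.
    have := sum_boundary_closed h closedR.
    under eq_bigr => v _ do rewrite bal_rest.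
    rewrite sumrN sum_edge_boundary /R connect0 (negPf disc) mulr0n subr0.
    by move/eqP; rewrite oppr_eq0 => /eqP.
  have bal' : balanced (E :\ e) h by move=> v; rewrite bal_rest he edge_boundary0 oppr0.
  move=> p pE; case: (p =P e) => [-> //|/eqP ne]; apply: uniqB => //.
  by rewrite in_setD1 ne.
- move=> f; have [h1 bal1 Hh1] := extB f.
  exists (fun p => if p == e then 0 else h1 p); last first.
    move=> p pB; have := subsetP sB p pB.
    by rewrite in_setD1 => /andP [/negPf -> _]; apply: Hh1.
  move=> v; rewrite (boundaryD1 _ _ eE) eqxx edge_boundary0 add0r -(bal1 v).
  by apply: eq_boundary => p; rewrite in_setD1 => /andP [/negPf ->].
Qed.

Lemma exists_balanced_basis E : exists B, balanced_basis E B.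
Proof.
elim: {E}#|E| {-2}E (erefl #|E|) => [|k IH] E cardE.
  have -> : E = set0 by apply/eqP; rewrite -cards_eq0 cardE.
  exists set0; split=> [|N]; first exact: sub0set.
  split=> [h _ _ p|f]; first by rewrite inE.
  by exists (fun _ => 0) => [v|p]; rewrite ?inE // /boundary big_set0.
have [e eE] : exists e, e \in E by apply/set0Pn; rewrite -card_gt0 cardE.
have [|B basisB] := IH (E :\ e).
  by move: cardE; rewrite (cardsD1 e E) eE add1n => -[].
case: (boolP (connect (incident (E :\ e)) (inl e.1) (inr e.2))) => conn.
  by exists (e |: B); apply: balanced_basis_cycle eE conn basisB.
by exists B; apply: balanced_basis_bridge eE conn basisB.
Qed.

Lemma free_abelian_of_balanced (C : zmodType) E (u : I * J -> C) :
  (forall (N : zmodType) (g : C -> N), zadditive g -> balanced E (g \o u)) ->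
  (forall (N : zmodType) (h : I * J -> N), balanced E h ->
     exists2 g : C -> N, zadditive g & {in E, g \o u =1 h}) ->
  (forall (N : zmodType) (g1 g2 : C -> N), zadditive g1 -> zadditive g2 ->
     {in E, g1 \o u =1 g2 \o u} -> g1 =1 g2) ->
  is_free_abelian C.
Proof.
move=> u_bal lift u_uniq; have [B [sBE basisB]] := exists_balanced_basis E.
exists {e | e \in B}, (fun q => u (val q)) => N f; have [uniqB extB] := basisB N.
split.
- have [h bal Hh] := extB (fun e => if insub e is Some q then f q else 0).
  have [g gA Hg] := lift N h bal.
  exists g; split=> // -[e eB] /=.
  by rewrite -[g _]/((g \o u) e) (Hg e (subsetP sBE e eB)) Hh // (insubT (mem B) eB).
- move=> g1 g2 g1A g2A eqB; apply: u_uniq => // e eE /=.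
  have dA : zadditive (fun w => g1 w - g2 w).
    by move=> w1 w2; rewrite g1A g2A addrACA opprD.
  apply/eqP; rewrite -subr_eq0; apply/eqP.
  apply: (uniqB _ (u_bal N _ dA)) => // p pB /=.
  by rewrite (eqB (exist _ p pB)) subrr.
Qed.

End BalancedEdgeLabellings.

Local Open Scope group_scope.

Definition ahom (H : groupType) (M : zmodType) (f : H -> M) :=
  forall x y, f (x * y) = (f x + f y)%R.

Section AdditiveHom.
Variables (H : groupType) (M : zmodType) (f : H -> M).
Hypothesis fA : ahom f.

Lemma ahom1 : f 1 = 0%R.
Proof. by apply: (@addrI _ (f 1)); rewrite -fA mulg1 addr0. Qed.

Lemma ahomV x : f x^-1 = (- f x)%R.
Proof. by apply: (@addrI _ (f x)); rewrite -fA mulgV ahom1 subrr. Qed.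

Lemma ahom_prod (T : Type) (r : seq T) (P : pred T) (F : T -> H) :
  f (\prod_(t <- r | P t) F t) = (\sum_(t <- r | P t) f (F t))%R.
Proof. exact: (big_morph f fA ahom1). Qed.

Lemma ahom_ker_subgroup : is_subgroup (fun x => f x = 0%R).
Proof. by split=> [|x y fx fy]; rewrite ?ahom1 // fA ahomV fx fy oppr0 addr0. Qed.

Lemma ahom_subgroup_gen0 (X : H -> Prop) x : subgroup_gen X x ->
  (forall y, X y -> f y = 0%R) -> f x = 0%R.
Proof. by move=> genx; apply: genx ahom_ker_subgroup. Qed.

Lemma ahom_commutator x : commutator_subgroup x -> f x = 0%R.
Proof.
move/ahom_subgroup_gen0; apply=> _ [y [z ->]].
by rewrite /commg /conjg !fA !ahomV addrCA addKr addNr.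
Qed.

End AdditiveHom.

Lemma ahom_comp (H : groupType) (M N : zmodType) (f : H -> M) (g : M -> N) :
  ahom f -> zadditive g -> ahom (g \o f).
Proof. by move=> fA gA x y /=; rewrite fA gA. Qed.

Lemma ghom1 (H K : groupType) (f : H -> K) : group_hom f -> f 1 = 1.
Proof. by move=> fM; apply: (@mulgI _ (f 1)); rewrite -fM !mulg1. Qed.

Lemma quotient_map1 (H K : groupType) (N : H -> Prop) (f : H -> K) x :
  is_quotient_map N f -> N x -> f x = 1.
Proof. by case=> _ _ ker /ker. Qed.

Lemma zadditive0 (M N : zmodType) (f : M -> N) : zadditive f -> f 0%R = 0%R.
Proof. by move=> fA; apply: (@addrI _ (f 0%R)); rewrite -fA !addr0. Qed.

Lemma zadditiveB (M N : zmodType) (f : M -> N) x y : zadditive f ->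
  f (x - y)%R = (f x - f y)%R.
Proof.
move=> fA; apply: (@addIr _ (f y)); rewrite -fA subrK; symmetry.
by rewrite -addrA addNr addr0.
Qed.

Lemma factor_surjective (T U V : Type) (p : T -> U) (F : T -> V) :
  (forall y, exists x, p x = y) -> (forall x1 x2, p x1 = p x2 -> F x1 = F x2) ->
  exists g : U -> V, forall x, g (p x) = F x.
Proof.
move=> /choice [s ps] Fp; exists (fun y => F (s y)) => x.
by apply: Fp; rewrite ps.
Qed.

Lemma factor_abelianization (H : groupType) (M N : zmodType) (p : H -> M) (Psi : H -> N) :
  is_abelianization p -> ahom Psi ->
  exists2 g : M -> N, zadditive g & forall x, g (p x) = Psi x.
Proof.
case=> pA psurj pker PsiA.
have [|g gp] := factor_surjective (F := Psi) psurj.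
  move=> x1 x2 eqp; apply/eqP; rewrite -subr_eq0; apply/eqP.
  have : p (x1 * x2^-1) = 0%R by rewrite pA (ahomV pA) eqp subrr.
  by move/pker/(ahom_commutator PsiA); rewrite PsiA (ahomV PsiA).
exists g => // y1 y2; have [x1 <-] := psurj y1; have [x2 <-] := psurj y2.
by rewrite -pA !gp PsiA.
Qed.

Lemma factor_cokernel (M N C K : zmodType) (f : M -> N) (c : N -> C) (gt : N -> K) :
  is_cokernel f c -> zadditive gt -> (forall x, gt (f x) = 0%R) ->
  exists2 g : C -> K, zadditive g & forall y, g (c y) = gt y.
Proof.
case=> cA csurj cker gtA gtf.
have [|g gc] := factor_surjective (F := gt) csurj.
  move=> y1 y2 eqc; apply/eqP; rewrite -subr_eq0; apply/eqP.
  have : c (y1 - y2)%R = 0%R by rewrite zadditiveB // eqc subrr.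
  by case/cker => x e; rewrite -zadditiveB // e gtf.
exists g => // z1 z2; have [y1 <-] := csurj z1; have [y2 <-] := csurj z2.
by rewrite -cA !gc gtA.
Qed.

Section ProdGroup.
Variables (m : nat) (F : 'I_m -> groupType).
Implicit Types x y : prodG F.

Lemma prodG_mulE x y k : (x * y) k = x k * y k.
Proof. by rewrite /= ffunE. Qed.

Lemma prodG_oneE k : (1 : prodG F) k = 1.
Proof. by rewrite /= ffunE. Qed.

Lemma prodG_inj_id i (z : F i) : prodG_inj z i = z.
Proof. by rewrite ffunE; case: (i =P i) => [e|//]; rewrite (eq_axiomK e). Qed.

Lemma prodG_inj_neq i (z : F i) k : k != i -> prodG_inj z k = 1.
Proof. by move=> ki; rewrite ffunE; case: (i =P k) => [e|//]; rewrite e eqxx in ki. Qed.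

Lemma prodG_inj_hom i : group_hom (@prodG_inj m F i).
Proof.
move=> z1 z2; apply/ffunP => k; rewrite prodG_mulE.
case: (k =P i) => [->|/eqP ki]; first by rewrite !prodG_inj_id.
by rewrite !prodG_inj_neq // mulg1.
Qed.

Lemma prodG_prod_inj x : x = \prod_(i < m) prodG_inj (x i).
Proof.
apply/ffunP => k.
rewrite (big_morph (fun y : prodG F => y k) (fun y z => prodG_mulE y z k) (prodG_oneE k)).
rewrite (eq_bigr (fun i => if i == k then x k else 1)); last first.
  move=> i _; case: eqP => [->|/eqP ik]; first by rewrite prodG_inj_id.
  by rewrite prodG_inj_neq // eq_sym.
by rewrite -big_mkcond big_pred1_eq.
Qed.

Lemma ahom_prodG (N : zmodType) (Phi : prodG F -> N) x : ahom Phi ->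
  Phi x = (\sum_(i < m) Phi (prodG_inj (x i)))%R.
Proof. by move=> PhiA; rewrite {1}(prodG_prod_inj x) (ahom_prod PhiA). Qed.

End ProdGroup.

Section Relator.
Variables (K : groupType) (J : finType) (S : {set J}) (b : J -> K).
Hypotheses (b_out : forall j, j \notin S -> b j = 1) (prod_b : \prod_j b j = 1).
Hypothesis b_free : forall T : {set J}, T \subset S -> #|T| = (#|S| - 1)%N ->
  free_group_basis (fun t : {j | j \in T} => b (sval t)).

Lemma ahom_sum_relator (N : zmodType) (phi : K -> N) : ahom phi ->
  (\sum_(j in S) phi (b j))%R = 0%R.
Proof.
move=> phiA; transitivity (phi (\prod_j b j)); last by rewrite prod_b ahom1.
rewrite (ahom_prod phiA) big_mkcond; apply: eq_bigr => j _.
by case: ifP => // /negbT /b_out ->; rewrite ahom1.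
Qed.

Lemma card_setD1_pred j : j \in S -> #|S :\ j| = (#|S| - 1)%N.
Proof. by move=> jS; rewrite (cardsD1 j S) jS add1n subn1. Qed.

Lemma ahom_relator_eq (N : zmodType) (phi1 phi2 : K -> N) : ahom phi1 -> ahom phi2 ->
  {in S, forall j, phi1 (b j) = phi2 (b j)} -> phi1 =1 phi2.
Proof.
move=> phi1A phi2A eqS.
have [T [TS cardT]] : exists T : {set J}, T \subset S /\ #|T| = (#|S| - 1)%N.
  have [->|[j jS]] := set_0Vmem S; first by exists set0; rewrite sub0set cards0.
  by exists (S :\ j); rewrite subsetDl card_setD1_pred.
have [_ uniqT] := @b_free _ TS cardT (to_multiplicative N) (fun _ => 0%R).
move=> x; apply: (uniqT phi1 phi2 phi1A phi2A) => -[j jT] /=.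
by apply: eqS; apply: (subsetP TS).
Qed.

Lemma ahom_relator_exists (N : zmodType) (h : J -> N) : (\sum_(j in S) h j)%R = 0%R ->
  exists2 phi : K -> N, ahom phi & {in S, forall j, phi (b j) = h j}.
Proof.
move=> sum_h; have [S0|[j0 j0S]] := set_0Vmem S.
  by exists (fun _ => 0%R) => [x y|j]; rewrite ?addr0 // S0 inE.
have [[phi [phiA phib]] _] := @b_free _ (subsetDl S [set j0]) (card_setD1_pred j0S)
  (to_multiplicative N) (fun t => h (sval t)).
have phiT j : j \in S :\ j0 -> phi (b j) = h j by move=> jT; apply: (phib (exist _ j jT)).
exists phi => // j jS; case: (eqVneq j j0) => [->|ne]; last first.
  by apply: phiT; rewrite in_setD1 ne.
have rest : (\sum_(k in S | k != j0) phi (b k) = \sum_(k in S | k != j0) h k)%R.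
  by apply: eq_bigr => k /andP [kS kj0]; apply: phiT; rewrite in_setD1 kj0.
apply: (@addIr _ (\sum_(k in S | k != j0) h k)%R).
move: (ahom_sum_relator phiA) sum_h.
by rewrite (bigD1 j0 j0S) /= rest (bigD1 j0 j0S) /= => -> ->.
Qed.

End Relator.

Section Cokernel.
(* Keeps the index [i] of [qbS i] explicit. *)
Local Unset Implicit Arguments.
Variables (n m : nat) (G : groupType) (a : 'I_n -> G).
Hypothesis Hgen : forall x : G, subgroup_gen (fun y => exists j, y = a j) x.
Variables (S : 'I_m -> {set 'I_n}) (GS : 'I_m -> groupType) (pi : forall i, G -> GS i).
Hypothesis Hpi : forall i, is_quotient_map
  (normal_closure (fun x => exists2 j, j \notin S i & x = a j)) (pi i).
Variables (Gb : groupType) (qb : G -> Gb).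
Hypothesis Hqb : is_quotient_map (subgroup_gen (fun x => x = \prod_(j < n) a j)) qb.
Variables (GbS : 'I_m -> groupType) (qbS : forall i, GS i -> GbS i).
Hypothesis HqbS : forall i, is_quotient_map
  (subgroup_gen (fun x => x = \prod_(j < n) pi i (a j))) (qbS i).
Hypothesis HfreeS : forall (i : 'I_m) (T : {set 'I_n}),
  T \subset S i -> #|T| = (#|S i| - 1)%N ->
  free_group_basis (fun t : {j : 'I_n | j \in T} => qbS i (pi i (a (sval t)))).
Variable rhob : Gb -> prodG GbS.
Hypothesis Hrhob : forall x : G, rhob (qb x) = [ffun i => qbS i (pi i x)].
Variables (Gbab Abab C : zmodType) (abGb : Gb -> Gbab) (abAb : prodG GbS -> Abab).
Variables (rhobab : Gbab -> Abab) (c : Abab -> C).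
Hypotheses (HabGb : is_abelianization abGb) (HabAb : is_abelianization abAb).
Hypothesis Hrhobab : forall x : Gb, rhobab (abGb x) = abAb (rhob x).
Hypothesis Hc : is_cokernel rhobab c.

Let b i j : GbS i := qbS i (pi i (a j)).
Let E := [set e : 'I_m * 'I_n | e.2 \in S e.1].
Let gen (e : 'I_m * 'I_n) : C := c (abAb (@prodG_inj m GbS e.1 (b e.1 e.2))).

Let mem_E i j : ((i, j) \in E) = (j \in S i).
Proof. by rewrite inE. Qed.

Let qbS_hom i : group_hom (qbS i).
Proof. by case: (HqbS i). Qed.

Lemma b_out i j : j \notin S i -> b i j = 1.
Proof.
move=> jS; rewrite /b (quotient_map1 (Hpi i)); first exact: ghom1.
by move=> N _; apply; exists j.
Qed.

Lemma prod_b i : \prod_j b i j = 1.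
Proof.
rewrite /b -(big_morph _ (qbS_hom i) (ghom1 (qbS_hom i))).
by apply: (quotient_map1 (HqbS i)) => N _; apply.
Qed.

Let coord_hom (N : zmodType) (g : C -> N) i : zadditive g ->
  ahom (fun y : GbS i => g (c (abAb (@prodG_inj m GbS i y)))).
Proof.
have [abAbA _ _] := HabAb; have [cA _ _] := Hc.
by move=> gA y z; rewrite prodG_inj_hom abAbA cA gA.
Qed.

Lemma gen_balanced (N : zmodType) (g : C -> N) : zadditive g -> balanced E (g \o gen).
Proof.
move=> gA; have [abAbA _ _] := HabAb; have [cA _ cker] := Hc.
have PhiA : ahom (g \o c \o abAb) := ahom_comp (ahom_comp abAbA cA) gA.
apply/balancedP; split=> [i|j].
  rewrite (eq_bigl _ _ (mem_E i)).
  exact: (ahom_sum_relator (b_out i) (prod_b i) (coord_hom _ _ i gA)).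
transitivity (\sum_i (g \o c \o abAb) (@prodG_inj m GbS i (rhob (qb (a j)) i)))%R.
  rewrite big_mkcond; apply: eq_bigr => i _; rewrite Hrhob ffunE mem_E -/(b i j).
  case: ifP => // /negbT /b_out ->; rewrite (ghom1 (@prodG_inj_hom _ GbS i)).
  exact/esym/(ahom1 PhiA).
rewrite -ahom_prodG // /= -Hrhobab (proj2 (cker _)); last by exists (abGb (qb (a j))).
exact: zadditive0.
Qed.

Lemma gen_hom_eq (N : zmodType) (g1 g2 : C -> N) : zadditive g1 -> zadditive g2 ->
  {in E, g1 \o gen =1 g2 \o gen} -> g1 =1 g2.
Proof.
move=> g1A g2A eqE w; have [abAbA abAb_onto _] := HabAb; have [cA c_onto _] := Hc.
have [y <-] := c_onto w; have [x <-] := abAb_onto y.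
have /= -> := ahom_prodG x (ahom_comp (ahom_comp abAbA cA) g1A).
have /= -> := ahom_prodG x (ahom_comp (ahom_comp abAbA cA) g2A).
apply: eq_bigr => i _.
apply: (ahom_relator_eq (HfreeS i) (coord_hom _ _ i g1A) (coord_hom _ _ i g2A) _ (x i)).
by move=> j jS; apply: (eqE (i, j)); rewrite mem_E.
Qed.

Lemma balanced_lift (N : zmodType) (h : 'I_m * 'I_n -> N) : balanced E h ->
  exists2 g : C -> N, zadditive g & {in E, g \o gen =1 h}.
Proof.
case/balancedP => rows cols.
have psi_ex i : exists psi : GbS i -> N,
    ahom psi /\ {in S i, forall j, psi (b i j) = h (i, j)}.
  have [|psi psiA psib] :=
    ahom_relator_exists (b_out i) (prod_b i) (HfreeS i) (h := fun j => h (i, j)).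
    by rewrite -[RHS](rows i) (eq_bigl _ _ (mem_E i)).
  by exists psi.
have [psi psiP] :=
  non_dep_dep_functional_choice choice (fun i => GbS i -> N) _ psi_ex.
pose Psi (x : prodG GbS) := (\sum_i psi i (x i))%R.
have PsiA : ahom Psi.
  move=> x y; rewrite /Psi -big_split; apply: eq_bigr => i _.
  by rewrite prodG_mulE (psiP i).1.
have Psi_inj i y : Psi (@prodG_inj m GbS i y) = psi i y.
  rewrite /Psi (bigD1 i) //= prodG_inj_id big1 ?addr0 // => k ki.
  by rewrite prodG_inj_neq // (ahom1 (psiP k).1).
have [gt gtA gtE] := factor_abelianization HabAb PsiA.
have gt_rho x : gt (rhobab x) = 0%R.
  have [_ abGb_onto _] := HabGb; have [_ qb_onto _] := Hqb.
  have [y <-] := abGb_onto x; have [z <-] := qb_onto y.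
  rewrite Hrhobab gtE Hrhob /Psi /=; under eq_bigr => i _ do rewrite ffunE.
  have PhiA : ahom (fun z => \sum_i psi i (qbS i (pi i z)))%R.
    move=> z1 z2; rewrite -big_split; apply: eq_bigr => i _ /=.
    by have [piM _ _] := Hpi i; rewrite piM (qbS_hom i) (psiP i).1.
  apply: (ahom_subgroup_gen0 PhiA (Hgen z)) => _ [j ->].
  rewrite -[RHS](cols j) [RHS]big_mkcond; apply: eq_bigr => i _.
  rewrite mem_E -/(b i j).
  case: ifP => [/(psiP i).2 // | /negbT /b_out ->].
  exact: (ahom1 (psiP i).1).
have [g gA gE] := factor_cokernel Hc gtA gt_rho.
exists g => // -[i j]; rewrite mem_E => jS /=.
by rewrite gE gtE Psi_inj (psiP i).2.
Qed.

Lemma cokernel_free_abelian : is_free_abelian C.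
Proof. exact: free_abelian_of_balanced gen_balanced balanced_lift gen_hom_eq. Qed.

End Cokernel.

Unset Implicit Arguments.
Set Strict Implicit.
Set Printing Implicit Defensive.

Theorem mainTheorem14
  (n m : nat) (G : groupType) (a : 'I_n -> G)
  (Hgen : forall x : G, subgroup_gen (fun y => exists j, y = a j) x)
  (Hz : forall x : G, (\prod_(j < n) a j) * x = x * (\prod_(j < n) a j))
  (S : 'I_m -> {set 'I_n})
  (HS : forall i r : 'I_m, i != r -> (#|S i :&: S r| <= 1)%N)
  (GS : 'I_m -> groupType) (pi : forall i, G -> GS i)
  (Hpi : forall i, is_quotient_map
           (normal_closure (fun x => exists2 j, j \notin S i & x = a j)) (pi i))
  (Gb : groupType) (qb : G -> Gb)
  (Hqb : is_quotient_map (subgroup_gen (fun x => x = \prod_(j < n) a j)) qb)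
  (GbS : 'I_m -> groupType) (qbS : forall i, GS i -> GbS i)
  (HqbS : forall i, is_quotient_map
           (subgroup_gen (fun x => x = \prod_(j < n) pi i (a j))) (qbS i))
  (HfreeS : forall (i : 'I_m) (T : {set 'I_n}),
      T \subset S i -> #|T| = (#|S i| - 1)%N ->
      free_group_basis (fun t : {j : 'I_n | j \in T} => qbS i (pi i (a (sval t)))))
  (rhob : Gb -> prodG GbS)
  (Hrhob_hom : group_hom rhob)
  (Hrhob : forall x : G, rhob (qb x) = [ffun i => qbS i (pi i x)])
  (Gab : zmodType) (abG : G -> Gab) (HabG : is_abelianization abG)
  (Aab : zmodType) (abA : prodG GS -> Aab) (HabA : is_abelianization abA)
  (Gbab : zmodType) (abGb : Gb -> Gbab) (HabGb : is_abelianization abGb)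
  (Abab : zmodType) (abAb : prodG GbS -> Abab) (HabAb : is_abelianization abAb)
  (HGabfree : free_abelian_basis (fun j : 'I_n => abG (a j)))
  (HAabfree : free_abelian_basis
      (fun p : {p : 'I_m * 'I_n | p.2 \in S p.1} =>
         abA (prodG_inj (pi (sval p).1 (a (sval p).2)))))
  (rhobab : Gbab -> Abab)
  (Hrhobab_add : zadditive rhobab)
  (Hrhobab : forall x : Gb, rhobab (abGb x) = abAb (rhob x)) :
  forall (C : zmodType) (c : Abab -> C), is_cokernel rhobab c -> is_free_abelian C.
Proof.
move=> C c Hc.
exact: (cokernel_free_abelian n m G a Hgen S GS pi Hpi Gb qb Hqb GbS qbS HqbS HfreeS
  rhob Hrhob Gbab Abab C abGb abAb rhobab c HabGb HabAb Hrhobab Hc).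
Qed.
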